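(* Let $(G,k)$ be an instance of PITVD, let $x$ be a cut vertex of $G$ and let $C$ be a pendant tree attached to $x$. Suppose some vertex of $C$ has degree at least $3$ in $G$. Let $H_C=\{u\in C: d_G(u)\ge3\}$, let $v\in H_C$ be the (unique) vertex of $H_C$ with the smallest distance from $x$, let $P_{x,v}$ be the unique path between $x$ and $v$ in $G[C\cup\{x\}]$, and let $D$ be the set consisting of the vertices of $P_{x,v}$ together with two arbitrary neighbors of $v$ in $C$ not on $P_{x,v}$. Then $(G,k)$ is a yes-instance of PITVD if and only if $(G-(C\setminus D),k)$ is a yes-instance of PITVD.
   Context: PITVD: the input is an undirected multigraph $G$ (no self-loops) and an integer $k$; the question is whether there exists $X\subseteq V(G)$ with $|X|\le k$ such that $G-X$ is a simple graph and every connected component of $G-X$ is a proper interval graph or a tree. If $x$ is a cut vertex of $G$ and $C$ is a connected component of $G-x$ that is a tree such that $C\cup\{x\}$ induces a tree in $G$, then $C$ is called a pendant tree attached to $x$. *)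

From mathcomp Require Import all_boot all_order all_algebra.
Set Implicit Arguments. Unset Strict Implicit. Unset Printing Implicit Defensive.
Import Order.TTheory GRing.Theory Num.Theory.

(* A multigraph on a finite vertex type V is given by an edge-multiplicity
   function m : V -> V -> nat (assumed symmetric with m u u = 0 in the
   theorem).  Subgraphs are induced subgraphs G[S] for S : {set V}. *)

Definition madj (V : finType) (m : V -> V -> nat) (S : {set V}) : rel V :=
  fun u w => [&& u \in S, w \in S & 0 < m u w].

Definition simple_on (V : finType) (m : V -> V -> nat) (S : {set V}) : Prop :=
  forall u w, u \in S -> w \in S -> m u w <= 1.

Definition comps (V : finType) (m : V -> V -> nat) (S : {set V}) : {set {set V}} :=
  [set [set w in S | connect (madj m S) u w] | u in S].

Definition connected_on (V : finType) (m : V -> V -> nat) (S : {set V}) : Prop :=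
  forall u w, u \in S -> w \in S -> connect (madj m S) u w.

Definition acyclic_on (V : finType) (m : V -> V -> nat) (S : {set V}) : Prop :=
  forall c : seq V, 3 <= size c -> uniq c -> ~~ cycle (madj m S) c.

Definition is_tree (V : finType) (m : V -> V -> nat) (S : {set V}) : Prop :=
  [/\ S != set0, simple_on m S, connected_on m S & acyclic_on m S].

(* G[S] is a proper interval graph: a simple graph having an interval model
   (closed intervals [l u, r u] of rationals) in which no interval properly
   contains another *)
Definition proper_interval (V : finType) (m : V -> V -> nat) (S : {set V}) : Prop :=
  simple_on m S /\
  exists l r : V -> rat,
    [/\ (forall u, u \in S -> (l u <= r u)%R),
        (forall u w, u \in S -> w \in S -> u != w ->
           (madj m S u w <-> Num.max (l u) (l w) <= Num.min (r u) (r w)))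
      & (forall u w, u \in S -> w \in S ->
           ~ [/\ l u <= l w, r w <= r u & (l u, r u) != (l w, r w)])]%R.

Definition pitvd_yes (V : finType) (m : V -> V -> nat) (S : {set V}) (k : nat) : Prop :=
  exists X : {set V},
    [/\ X \subset S, #|X| <= k, simple_on m (S :\: X)
      & forall K, K \in comps m (S :\: X) -> proper_interval m K \/ is_tree m K].

Definition cut_vertex (V : finType) (m : V -> V -> nat) (x : V) : Prop :=
  #|comps m [set: V]| < #|comps m [set~ x]|.

Definition pendant_tree (V : finType) (m : V -> V -> nat) (x : V) (C : {set V}) : Prop :=
  [/\ cut_vertex m x, C \in comps m [set~ x], is_tree m C & is_tree m (x |: C)].

Definition deg (V : finType) (m : V -> V -> nat) (u : V) : nat := \sum_(w : V) m u w.

Definition walk (V : finType) (m : V -> V -> nat) (x y : V) (n : nat) : Prop :=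
  exists p : seq V, [/\ size p = n, path (madj m [set: V]) x p & last x p = y].

Definition dist_le (V : finType) (m : V -> V -> nat) (x v u : V) : Prop :=
  forall n, walk m x u n -> exists2 n', n' <= n & walk m x v n'.

From mathcomp Require Import all_boot all_order all_algebra.
From mathcomp Require Import lra.
Set Implicit Arguments. Unset Strict Implicit. Unset Printing Implicit Defensive.
Import Order.TTheory GRing.Theory Num.Theory.

(* Deleting vertices preserves yes-instances, because proper interval graphs
   and trees are closed under connected induced subgraphs.  Conversely, let X'
   be a solution for G' = G - (C \ D).  If X' meets {x} u C, then
   {x} u (X' \ C) is no larger and solves G: removing x splits G into subtrees
   of C and connected subgraphs of components of G' - X'.  Otherwise X' itself
   solves G: in G' - X' the component of x contains the claw formed by v, a, b
   and the predecessor of v on P_{x,v}, so it is a tree, and the component of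
   x in G - X' is this tree with subtrees of the tree G[{x} u C] glued at x. *)

Lemma homo_connect (T T' : finType) (e : rel T) (e' : rel T') (f : T -> T') :
  (forall u w, e u w -> connect e' (f u) (f w)) ->
  forall u w, connect e u w -> connect e' (f u) (f w).
Proof.
move=> hf u _ /connectP[q pq ->].
elim: q u pq => [|y q IHq] u /=; first by rewrite connect0.
by case/andP=> /hf fuy /IHq; apply: connect_trans.
Qed.

Lemma path_last_edge (T : eqType) (e : rel T) x p :
  path e x p -> p != [::] -> exists2 u, u \in x :: p & e u (last x p).
Proof.
case/lastP: p => [//|q y]; rewrite rcons_path last_rcons => /andP[_ e_y] _.
by exists (last x q); rewrite // -rcons_cons mem_rcons in_cons mem_last orbT.
Qed.

Lemma three_disjoint_intervals (R : realDomainType) (lv rv la ra lb rb lc rc : R) :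
  (la <= ra)%R -> (lb <= rb)%R -> (lc <= rc)%R ->
  (lv <= ra)%R -> (la <= rv)%R -> (lv <= rb)%R -> (lb <= rv)%R ->
  (lv <= rc)%R -> (lc <= rv)%R ->
  (ra < lb \/ rb < la)%R -> (ra < lc \/ rc < la)%R -> (rb < lc \/ rc < lb)%R ->
  (lv < la /\ ra < rv \/ lv < lb /\ rb < rv \/ lv < lc /\ rc < rv)%R.
Proof.
by move=> *; do 3![match goal with H : (_ \/ _) |- _ => case: H => ? end]; lra.
Qed.

Section Components.
Variables (V : finType) (m : V -> V -> nat).
Hypothesis msym : forall u w, m u w = m w u.
Implicit Types (S T K : {set V}) (u w y : V).

Definition component S u : {set V} := [set w in S | connect (madj m S) u w].

Lemma madj_sym S : symmetric (madj m S).
Proof. by move=> u w; rewrite /madj msym andbCA. Qed.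

Lemma madj_in S T u w : u \in T -> w \in T -> madj m S u w -> madj m T u w.
Proof. by move=> uT wT /and3P[_ _ muw]; apply/and3P. Qed.

Lemma madj_subset S T : S \subset T -> subrel (madj m S) (madj m T).
Proof. by move=> /subsetP sST u w /and3P[uS wS muw]; apply/and3P; rewrite !sST. Qed.

Lemma connect_madj_subset S T :
  S \subset T -> subrel (connect (madj m S)) (connect (madj m T)).
Proof. by move=> sST; apply: connect_sub => u w /(madj_subset sST)/connect1. Qed.

Lemma connect_madj_in S u w : u \in S -> connect (madj m S) u w -> w \in S.
Proof.
move=> uS /connectP[q pq ->]; elim: q u uS pq => //= y q IHq u _.
by case/andP=> /and3P[_ yS _]; apply: IHq.
Qed.

Lemma path_madj_sub S y s : path (madj m S) y s -> {subset s <= S}.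
Proof.
elim: s y => //= z s IHs y /andP[/and3P[_ zS _] pzs] w.
by rewrite in_cons => /predU1P[->|/(IHs z pzs)].
Qed.

Lemma cycle_madj_sub S s : cycle (madj m S) s -> {subset s <= S}.
Proof. by case: s => //= y s /path_madj_sub sS w; rewrite -mem_rcons => /sS. Qed.

Lemma cycle_madj_in S T s :
  {subset s <= T} -> cycle (madj m S) s -> cycle (madj m T) s.
Proof.
move=> sT; apply: (sub_in_cycle (P := mem T)); last exact/allP.
by move=> u w uT wT; apply: madj_in.
Qed.

Lemma mem_component S u : u \in S -> u \in component S u.
Proof. by move=> uS; rewrite inE uS connect0. Qed.

Lemma component_sub S u : component S u \subset S.
Proof. by apply/subsetP=> w; rewrite inE => /andP[]. Qed.

Lemma component_in_comps S u : u \in S -> component S u \in comps m S.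
Proof. by move=> uS; apply/imsetP; exists u. Qed.

Lemma compsP S K : K \in comps m S -> exists2 u, u \in S & K = component S u.
Proof. by case/imsetP=> u uS ->; exists u. Qed.

Lemma comps_componentE S K u : K \in comps m S -> u \in K -> K = component S u.
Proof.
case/imsetP=> u0 _ -> /[!inE] /andP[_ u0u]; apply/setP=> w; rewrite !inE.
by rewrite (same_connect (sym_connect_sym (madj_sym S)) u0u).
Qed.

Lemma connected_component S u : connected_on m (component S u).
Proof.
move=> w1 w2 /[!inE] /andP[w1S uw1] /andP[_ uw2].
have /connectP[q pq ->] : connect (madj m S) w1 w2.
  by rewrite -(same_connect (sym_connect_sym (madj_sym S)) uw1).
apply/connectP; exists q => //; apply: (sub_in_path (P := [in component S u])) (pq).
  by move=> y z yK zK; apply: madj_in.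
apply/allP=> y /(path_connect pq) w1y.
by rewrite inE (connect_madj_in w1S w1y) (connect_trans uw1 w1y).
Qed.

Lemma connected_sub_component K S u :
  connected_on m K -> K \subset S -> u \in K -> K \subset component S u.
Proof.
move=> cK sKS uK; apply/subsetP=> w wK; rewrite inE (subsetP sKS) //=.
exact: connect_madj_subset sKS _ _ (cK u w uK wK).
Qed.

End Components.

Section Hereditary.
Variables (V : finType) (m : V -> V -> nat).
Implicit Types (S T K : {set V}).

Definition pi_or_tree K := proper_interval m K \/ is_tree m K.

Lemma simple_on_sub S T : S \subset T -> simple_on m T -> simple_on m S.
Proof. by move=> /subsetP sST simT u w uS wS; apply: simT; rewrite ?sST. Qed.

Lemma acyclic_on_sub S T : S \subset T -> acyclic_on m T -> acyclic_on m S.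
Proof.
move=> sST acT s s3 us; apply: contra (acT s s3 us).
exact/sub_cycle/madj_subset.
Qed.

Lemma proper_interval_sub S T : S \subset T -> proper_interval m T -> proper_interval m S.
Proof.
move=> sST [simT [l [r [lr adj nest]]]]; split; first exact: simple_on_sub simT.
have sS := subsetP sST.
exists l, r; split=> [u uS | u w uS wS uw | u w uS wS].
- by rewrite lr ?sS.
- by rewrite -adj ?sS // /madj uS wS !sS.
- by apply: nest; rewrite sS.
Qed.

Lemma is_tree_sub S T :
  S \subset T -> S != set0 -> connected_on m S -> is_tree m T -> is_tree m S.
Proof.
move=> sST S0 cS [_ simT _ acT]; split=> //.
  exact: simple_on_sub simT.
exact: acyclic_on_sub acT.
Qed.

Lemma pi_or_tree_sub S T :
  S \subset T -> S != set0 -> connected_on m S -> pi_or_tree T -> pi_or_tree S.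
Proof.
move=> sST S0 cS [/(proper_interval_sub sST)|/(is_tree_sub sST S0 cS)]; by [left | right].
Qed.

Hypothesis msym : forall u w, m u w = m w u.

Lemma pitvd_yes_sub S T k : S \subset T -> pitvd_yes m T k -> pitvd_yes m S k.
Proof.
move=> sST [X [_ Xk simX compsX]].
have sub : S :\: (X :&: S) \subset T :\: X by rewrite setDIr setDv setU0 setSD.
exists (X :&: S); split=> [||| K /compsP[u uSX ->]].
- exact: subsetIr.
- exact: leq_trans (subset_leq_card (subsetIl _ _)) Xk.
- exact: simple_on_sub simX.
have sKT := subset_trans (component_sub m _ u) sub.
have uT : u \in T :\: X := subsetP sub u uSX.
have cK : connected_on m (component m (S :\: (X :&: S)) u).
  exact: connected_component.
apply: (pi_or_tree_sub _ _ cK (compsX _ (component_in_comps m uT))).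
- exact: connected_sub_component cK sKT (mem_component m uSX).
- by apply/set0Pn; exists u; exact: mem_component.
Qed.

End Hereditary.

Section Claws.
Variables (V : finType) (m : V -> V -> nat).

Definition claw (K : {set V}) (v a b c : V) : Prop :=
  [/\ [&& v \in K, a \in K, b \in K & c \in K], uniq [:: v; a; b; c],
      [&& 0 < m v a, 0 < m v b & 0 < m v c]
    & [&& m a b == 0, m a c == 0 & m b c == 0]].

Lemma claw_not_proper_interval K v a b c : claw K v a b c -> ~ proper_interval m K.
Proof.
case=> /and4P[vK aK bK cK]; rewrite /= !inE !negb_or.
move=> /and4P[/and3P[va vb vc] /andP[ab ac] bc _].
move=> /and3P[mva mvb mvc] /and3P[/eqP mab /eqP mac /eqP mbc] [_ [l [r [lr adj nest]]]].
have meet u w : u \in K -> w \in K -> u != w -> 0 < m u w ->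
    (l u <= r w /\ l w <= r u)%R.
  move=> uK wK uw muw; have := (adj u w uK wK uw).1.
  by rewrite /madj uK wK muw le_min !ge_max => /(_ isT) /andP[/andP[_ ?] /andP[? _]].
have apart u w : u \in K -> w \in K -> u != w -> m u w = 0 ->
    (r u < l w \/ r w < l u)%R.
  move=> uK wK uw muw; case: (ltP (r u) (l w)) => [|lwru]; first by left.
  case: (ltP (r w) (l u)) => [|luwr]; first by right.
  have := (adj u w uK wK uw).2.
  by rewrite /madj uK wK muw le_min !ge_max lwru luwr (lr u uK) (lr w wK) => /(_ isT).
have inside u : u \in K -> (l v < l u)%R -> (r u < r v)%R -> False.
  move=> uK lvu ruv; apply: (nest v u vK uK); split; rewrite ?ltW //.
  by rewrite xpair_eqE negb_and lt_eqF.
have [lvra lavr] := meet v a vK aK va mva.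
have [lvrb lbvr] := meet v b vK bK vb mvb.
have [lvrc lcvr] := meet v c vK cK vc mvc.
have := three_disjoint_intervals (lr a aK) (lr b bK) (lr c cK) lvra lavr lvrb lbvr lvrc lcvr
  (apart a b aK bK ab mab) (apart a c aK cK ac mac) (apart b c bK cK bc mbc).
by case=> [[]|[[]|[]]]; apply: inside.
Qed.

Hypothesis msym : forall u w, m u w = m w u.

Lemma acyclic_no_triangle K u w z :
  acyclic_on m K -> [&& u \in K, w \in K & z \in K] -> uniq [:: u; w; z] ->
  0 < m u w -> 0 < m u z -> m w z = 0.
Proof.
move=> acK /and3P[uK wK zK] uwz muw muz; apply/eqP; rewrite -leqn0 leqNgt.
move: (acK [:: u; w; z] isT uwz); apply: contraNN => mwz.
by rewrite /= /madj uK wK zK muw mwz msym muz.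
Qed.

Lemma acyclic_claw K v a b c :
  (forall u, m u u = 0) -> acyclic_on m K ->
  [&& v \in K, a \in K, b \in K & c \in K] -> [&& a != b, a != c & b != c] ->
  [&& 0 < m v a, 0 < m v b & 0 < m v c] -> claw K v a b c.
Proof.
move=> mloop acK inK /and3P[ab ac bc] adj.
have adj_neq u w : 0 < m u w -> u != w by apply: contraTneq => ->; rewrite mloop.
case/and4P: (inK) => vK aK bK cK; case/and3P: (adj) => mva mvb mvc.
have no_tri y z : y \in K -> z \in K -> y != z -> 0 < m v y -> 0 < m v z -> m y z == 0.
  move=> yK zK yz mvy mvz; apply/eqP; apply: (acyclic_no_triangle acK _ _ mvy mvz).
    by rewrite vK yK zK.
  by rewrite /= !inE !negb_or yz !adj_neq.
split=> //; first by rewrite /= !inE !negb_or ab ac bc !adj_neq.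
by rewrite !no_tri.
Qed.

End Claws.

Section PendantTree.
Variables (V : finType) (m : V -> V -> nat).
Hypothesis msym : forall u w, m u w = m w u.
Variables (x : V) (C : {set V}).
Hypothesis C_comp : C \in comps m [set~ x].
Hypothesis xC_tree : is_tree m (x |: C).
Implicit Types (T X K L : {set V}) (u w y z : V).

Lemma pendant_notin : x \notin C.
Proof.
have [u _ ->] := compsP C_comp.
by apply/negP=> /(subsetP (component_sub _ _ _)); rewrite !inE eqxx.
Qed.

Lemma pendant_side y z :
  y != x -> z != x -> connect (madj m [set~ x]) y z -> (y \in C) = (z \in C).
Proof.
have [u _ ->] := compsP C_comp => yx zx yz; rewrite !inE yx zx /=.
by rewrite (same_connect_r (sym_connect_sym (madj_sym msym _)) yz).
Qed.

Lemma pendant_edge u w : u \in C -> w != x -> 0 < m u w -> w \in C.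
Proof.
move=> uC wx muw; have ux : u != x by apply: contraNneq pendant_notin => <-.
by rewrite -(pendant_side ux wx) // connect1 // /madj !inE ux wx.
Qed.

Lemma pendant_edge0 u w : u \in C -> w \notin x |: C -> m u w = 0.
Proof.
rewrite in_setU1 negb_or => uC /andP[wx wC]; apply/eqP; rewrite -leqn0 leqNgt.
by apply: contra wC; apply: pendant_edge.
Qed.

Lemma pendant_connected_side K u w :
  connected_on m K -> x \notin K -> u \in K -> w \in K -> (u \in C) = (w \in C).
Proof.
move=> cK xK uK wK; have Kx : K \subset [set~ x].
  by apply/subsetP=> y yK; rewrite !inE; apply: contraNneq xK => <-.
apply: pendant_side; rewrite -?in_setC1 ?(subsetP Kx) //.
exact: connect_madj_subset Kx _ _ (cK u w uK wK).
Qed.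

Lemma pendant_path_side T y s :
  path (madj m T) y s -> x \notin y :: s -> {in s, forall w, (w \in C) = (y \in C)}.
Proof.
move=> pys xys w ws; have wys : w \in y :: s by rewrite in_cons ws orbT.
have yx : y != x by apply: contraNneq xys => <-; exact: mem_head.
have wx : w != x by apply: contraNneq xys => <-.
rewrite (pendant_side yx wx) //; apply: (path_connect (e := madj m [set~ x])) wys.
apply: (sub_in_path (P := [pred z | z != x])) pys; last first.
  by apply/allP=> z zys; apply: contraNneq xys => <-.
by move=> u z ux zx; apply: madj_in; rewrite !inE.
Qed.

Lemma pendant_cycle_side T s : cycle (madj m T) s -> uniq s -> 2 <= size s ->
  {subset s <= x |: C} \/ {subset s <= [predC C]}.
Proof.
move=> cs us s2.
suff [y [t [pyt xyt syt]]] : exists y t,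
    [/\ path (madj m T) y t, x \notin y :: t & {subset s <= x :: y :: t}].
  have side := pendant_path_side pyt xyt.
  case yC: (y \in C); [left | right] => w /syt; rewrite !inE => /or3P[/eqP->|/eqP->|/side->];
    by rewrite ?eqxx ?yC ?(negbTE pendant_notin) ?orbT.
case/boolP: (x \in s) => [/rot_to[i [|y t] ei] | xs].
- by move: s2; rewrite -(size_rot i) ei.
- move: cs us; rewrite -(rot_cycle i) -(rot_uniq i) ei /= rcons_path.
  case/andP=> _ /andP[pyt _] /andP[xyt _]; exists y, t; split=> // w.
  by rewrite -(mem_rot i) ei.
- case: s cs xs s2 {us} => [//|y t] /=; rewrite rcons_path => /andP[pyt _] xyt _.
  by exists y, t; split=> // w wyt; rewrite in_cons wyt orbT.
Qed.

Section Lift.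
Variables (S : {set V}) (v a b c : V).
Hypothesis notC_sub : ~: C \subset S.
Hypothesis claw_SxC : claw m (S :&: (x |: C)) v a b c.
Hypothesis x_conn_v : connect (madj m (S :&: (x |: C))) x v.

Section Solution.
Variable X' : {set V}.
Hypothesis X'_simple : simple_on m (S :\: X').
Hypothesis X'_comps : forall K, K \in comps m (S :\: X') -> pi_or_tree m K.

Lemma pendant_outside_mem X y :
  X' :\: C \subset X -> y \in ~: X -> y \notin C -> y \in S :\: X'.
Proof.
move=> sX yX yC; rewrite in_setD (subsetP notC_sub) ?inE // andbT.
by move: yX; rewrite inE; apply: contraNN => yX'; rewrite (subsetP sX) // in_setD yC.
Qed.

Lemma pendant_lift_simple X : X' :\: C \subset X -> simple_on m (~: X).
Proof.
move=> sX u w uX wX; have [_ simxC _ _] := xC_tree.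
case uC: (u \in C).
  case wxC: (w \in x |: C); first by apply: simxC; rewrite // in_setU1 uC orbT.
  by rewrite (pendant_edge0 uC (negbT wxC)).
case wC: (w \in C).
  case uxC: (u \in x |: C); first by apply: simxC; rewrite // in_setU1 wC orbT.
  by rewrite msym (pendant_edge0 wC (negbT uxC)).
by apply: X'_simple; apply: (pendant_outside_mem sX); rewrite ?uC ?wC.
Qed.

Lemma pendant_lift_off_x X K :
  X' :\: C \subset X -> K \in comps m (~: X) -> x \notin K -> pi_or_tree m K.
Proof.
move=> sX /compsP[u uX ->] {K}; set K := component m (~: X) u => xK.
have cK : connected_on m K by exact: connected_component.
have uK : u \in K := mem_component m uX.
have K_ne : K != set0 by apply/set0Pn; exists u.
have side w : w \in K -> (w \in C) = (u \in C).
  by move=> wK; rewrite (pendant_connected_side cK xK uK wK).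
case uC: (u \in C).
  right; apply: is_tree_sub xC_tree => //; apply/subsetP=> w wK.
  by rewrite in_setU1 side // uC orbT.
have uSX : u \in S :\: X' by apply: (pendant_outside_mem sX); rewrite ?uC.
apply: pi_or_tree_sub K_ne (cK) (X'_comps (component_in_comps m uSX)).
apply: connected_sub_component (cK) _ uK; apply/subsetP=> w wK.
apply: (pendant_outside_mem sX); first exact: subsetP (component_sub m _ u) w wK.
by rewrite side // uC.
Qed.

Lemma pendant_x_component_tree :
  [disjoint X' & x |: C] -> is_tree m (component m (S :\: X') x).
Proof.
move=> dX; set K := component m (S :\: X') x.
have SxC_SX : S :&: (x |: C) \subset S :\: X'.
  by apply/subsetP=> w /setIP[wS wxC]; rewrite in_setD wS (disjointFl dX).
have xSX : x \in S :\: X'.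
  by rewrite in_setD (subsetP notC_sub) ?inE ?pendant_notin // (disjointFl dX) ?setU11.
have claw_K : claw m K v a b c.
  case: claw_SxC => /and4P[vS aS bS cS] uvabc adj nadj; split=> //.
  case/and3P: (adj) => mva mvb mvc.
  have xv : connect (madj m (S :\: X')) x v by apply: connect_madj_subset x_conn_v.
  have vK : v \in K by rewrite inE (subsetP SxC_SX).
  have nbK w : w \in S :&: (x |: C) -> 0 < m v w -> w \in K.
    move=> wS mvw; rewrite inE (subsetP SxC_SX) //= (connect_trans xv) // connect1 //.
    by rewrite /madj mvw !(subsetP SxC_SX).
  by rewrite vK !nbK.
by case: (X'_comps (component_in_comps m xSX)) => // /(claw_not_proper_interval claw_K).
Qed.

Lemma pendant_component_outside :
  component m (~: X') x :\: C \subset component m (S :\: X') x.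
Proof.
(* Contracting C onto x turns walks of G - X' into walks of G' - X', because
   C is attached to the rest of G only through x. *)
pose f y := if y \in C then x else y.
have collapse u w : madj m (~: X') u w -> connect (madj m (S :\: X')) (f u) (f w).
  case/and3P=> uX wX muw; rewrite /f; case: ifP => uC; case: ifP => wC.
  - exact: connect0.
  - have -> : w = x by apply/eqP; apply: contraFT wC => wx; apply: pendant_edge uC wx muw.
    exact: connect0.
  - have -> : u = x.
      by apply/eqP; apply: contraFT uC => ux; apply: pendant_edge wC ux _; rewrite msym.
    exact: connect0.
  - apply: connect1; rewrite /madj muw andbT.
    by rewrite !(pendant_outside_mem (subsetDl X' C)) ?uC ?wC.
apply/subsetP=> w /setDP[/[!inE] /andP[wX xw] wC].
have := homo_connect collapse xw; rewrite /f (negbTE pendant_notin) (negbTE wC) => ->.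
by rewrite andbT -in_setD (pendant_outside_mem (subsetDl X' C)) ?inE.
Qed.

Lemma pendant_lift_at_x K :
  [disjoint X' & x |: C] -> K \in comps m (~: X') -> x \in K -> is_tree m K.
Proof.
move=> dX KX xK; rewrite (comps_componentE msym KX xK) {K KX xK}.
have xX : x \in ~: X' by rewrite inE (disjointFl dX) ?setU11.
split.
- by apply/set0Pn; exists x; apply: mem_component.
- exact: simple_on_sub (component_sub m _ x) (pendant_lift_simple (subsetDl X' C)).
- exact: connected_component.
move=> s s3 us; apply/negP=> cs.
have no_cycle L : acyclic_on m L -> {subset s <= L} -> False.
  by move=> acL sL; move: (acL s s3 us); rewrite (cycle_madj_in sL cs).
case: (pendant_cycle_side cs us (ltnW s3)) => side.
  by case: xC_tree => _ _ _ /no_cycle; apply.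
case: (pendant_x_component_tree dX) => _ _ _ /no_cycle; apply=> w ws.
apply: (subsetP pendant_component_outside).
by rewrite in_setD (cycle_madj_sub cs ws) andbT; apply: side.
Qed.

Lemma pendant_solution_lift : exists2 X : {set V}, #|X| <= #|X'| &
  simple_on m (~: X) /\ forall K, K \in comps m (~: X) -> pi_or_tree m K.
Proof.
case: (boolP [disjoint X' & x |: C]) => dX.
  exists X' => //; split=> [|K KX]; first exact/pendant_lift_simple/subsetDl.
  case: (boolP (x \in K)) => xK; first by right; apply: pendant_lift_at_x.
  exact: pendant_lift_off_x (subsetDl _ _) KX xK.
have sX : X' :\: C \subset x |: (X' :\: C) by apply: subsetUr.
exists (x |: (X' :\: C)); last split=> [|K KX].
- rewrite cardsU1 -(cardsID C X') leq_add2r.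
  have [w /setIP[wX' /setU1P[wx | wC]]] : exists w, w \in X' :&: (x |: C).
    by apply/set0Pn; rewrite setI_eq0.
    by rewrite in_setD -wx wX' wx (negbTE pendant_notin).
  apply: leq_trans (leq_b1 _) _; rewrite card_gt0; apply/set0Pn.
  by exists w; rewrite inE wX' wC.
- exact: pendant_lift_simple.
apply: pendant_lift_off_x sX (KX) _; have [u _ ->] := compsP KX.
by apply/negP=> /(subsetP (component_sub _ _ _)); rewrite !inE eqxx.
Qed.

End Solution.

Lemma pitvd_yes_pendant_lift k : pitvd_yes m S k -> pitvd_yes m [set: V] k.
Proof.
case=> X' [_ X'k X'simple X'comps].
have [X XX' [simX compsX]] := pendant_solution_lift X'simple X'comps.
by exists X; rewrite setTD; split=> //; apply: leq_trans X'k.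
Qed.

End Lift.

End PendantTree.

Theorem lemma19 (V : finType) (m : V -> V -> nat)
  (msym : forall u w, m u w = m w u) (mloop : forall u, m u u = 0)
  (k : nat) (x : V) (C : {set V})
  (hC : pendant_tree m x C)
  (hH : exists2 u, u \in C & 3 <= deg m u)
  (v : V) (hvC : v \in C) (hvdeg : 3 <= deg m v)
  (hvmin : forall u, u \in C -> 3 <= deg m u -> dist_le m x v u)
  (p : seq V) (hp : path (madj m (x |: C)) x p) (hpl : last x p = v)
  (hpu : uniq (x :: p))
  (a b : V) (haC : a \in C) (hbC : b \in C) (hab : a != b)
  (hva : 0 < m v a) (hvb : 0 < m v b)
  (haP : a \notin x :: p) (hbP : b \notin x :: p) :
  let D := a |: (b |: [set w in x :: p]) in
  pitvd_yes m [set: V] k <-> pitvd_yes m (~: (C :\: D)) k.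
Proof.
move=> D; split; first exact/pitvd_yes_sub/subsetT.
case: hC => _ C_comp _ xC_tree.
set SxC := ~: (C :\: D) :&: (x |: C).
have D_SxC w : w \in D -> w \in x |: C -> w \in SxC.
  by move=> wD wxC; rewrite in_setI in_setC in_setD wD wxC.
have p_SxC w : w \in x :: p -> w \in SxC.
  move=> wp; apply: D_SxC; first by rewrite !in_setU1 in_set wp !orbT.
  by move: wp; rewrite in_cons => /predU1P[->|/(path_madj_sub hp)]; rewrite ?setU11.
have [pr prp /and3P[_ _ mprv]] : exists2 pr, pr \in x :: p & madj m (x |: C) pr v.
  rewrite -hpl; apply: path_last_edge hp _; apply: contraTneq hvC => p0.
  by move: hpl; rewrite p0 => <-; rewrite (negbTE (pendant_notin C_comp)).
apply: (pitvd_yes_pendant_lift msym C_comp xC_tree (v := v) (a := a) (b := b) (c := pr)).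
- by apply/subsetP=> w; rewrite !inE => /negbTE->; rewrite andbF.
- apply: (acyclic_claw msym mloop).
  + by case: xC_tree => _ _ _; apply: acyclic_on_sub; exact: subsetIr.
  + have vp : v \in x :: p by rewrite -hpl mem_last.
    by rewrite (p_SxC v) ?(p_SxC pr) ?D_SxC ?in_setU1 ?eqxx ?haC ?hbC ?orbT.
  + have notp w : w \notin x :: p -> w != pr by move=> wp; apply: contraNneq wp => ->.
    by rewrite hab !notp.
  + by rewrite hva hvb msym mprv.
- apply/connectP; exists p; last by rewrite hpl.
  apply: (sub_in_path (P := [in SxC])) (hp); first by move=> u w uS wS; apply: madj_in.
  by apply/allP=> w /p_SxC.
Qed.
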